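(* Let $g$ be a real binary form of degree $m$, let $q$ be a sum of squares real binary form of degree $2d-2m$, and let $p$ be a sum of squares real binary form of degree $2d$. If $g$ and $q$ are coprime, then there exists a sum of squares real binary form $s$ of degree $2m$ such that $p\equiv sq \pmod g$, i.e. $p-sq=tg$ for some real binary form $t$.
   Context: A real binary form of degree $n$ is a homogeneous polynomial of degree $n$ in two variables $x_1,x_2$ with real coefficients. A sum of squares binary form of degree $2n$ is one of the form $\sum_i w_i^2$ with $w_i$ real binary forms of degree $n$. Two binary forms are coprime if their greatest common divisor is a constant. *)

From HB Require Import structures.
From mathcomp Require Import all_boot all_order all_algebra.
From mathcomp Require Import reals.
From mathcomp Require Import mpoly.
Set Implicit Arguments. Unset Strict Implicit. Unset Printing Implicit Defensive.
Import Order.TTheory GRing.Theory Num.Theory.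
Local Open Scope ring_scope.

(* A real binary form of degree n : a homogeneous polynomial of degree n in
   two variables x_1, x_2 (the zero polynomial is homogeneous of every degree). *)
Definition binary_form (R : realType) (n : nat) (p : {mpoly R[2]}) : Prop :=
  p \is n.-homog.

Definition sos_form (R : realType) (n : nat) (p : {mpoly R[2]}) : Prop :=
  exists ws : seq {mpoly R[2]},
    (forall w, w \in ws -> binary_form n w) /\ p = \sum_(w <- ws) w ^+ 2.

Definition mdivides (R : realType) (h p : {mpoly R[2]}) : Prop :=
  exists k : {mpoly R[2]}, p = h * k.

Definition coprime_forms (R : realType) (g q : {mpoly R[2]}) : Prop :=
  forall h : {mpoly R[2]}, mdivides h g -> mdivides h q ->
    exists c : R, h = c%:MP.

(* Dehomogenize along a chart f |-> f(X, 1 + cX), with c chosen so that g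
   keeps its degree m; on forms of degree k this is a bijection onto the
   polynomials of degree at most k, and it preserves coprimality.  Writing
   G, Q, P for the images of g, q, p, coprimality gives b with b Q = 1 mod G,
   and P Q = sum z^2 since p q is a sum of squares.  The residues w_z of b z
   modulo G have degree less than m and S = sum w_z^2 satisfies
   S Q = b^2 P Q^2 = P mod G; homogenizing the w_z in degree m yields s.
   When g = 0, coprimality forces q to be a nonzero constant a and
   s = p q / a^2 works. *)
From HB Require Import structures.
From mathcomp Require Import all_boot all_order all_algebra.
From mathcomp Require Import reals.
From mathcomp Require Import mpoly.
From mathcomp Require Import zify ring.
Set Implicit Arguments. Unset Strict Implicit. Unset Printing Implicit Defensive.
Import Order.TTheory GRing.Theory Num.Theory.
Local Open Scope ring_scope.

Lemma coefK_leq (R : nzSemiRingType) k (F : {poly R}) :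
  (size F <= k)%N -> \poly_(i < k) F`_i = F.
Proof.
move=> hF; apply/polyP => j; rewrite coef_poly.
by case: ltnP => // hj; rewrite nth_default // (leq_trans hF hj).
Qed.

Lemma mpolyX2E (R : ringType) (m : 'X_{1..2}) :
  'X_[m] = 'X_ord0 ^+ m ord0 * 'X_ord_max ^+ m ord_max :> {mpoly R[2]}.
Proof.
rewrite mpolyXE_id big_ord_recl big_ord_recl big_ord0 mulr1.
by congr (_ * _ ^+ m _); apply: val_inj.
Qed.

Lemma mdeg2 (m : 'X_{1..2}) : mdeg m = (m ord0 + m ord_max)%N.
Proof.
rewrite mdegE big_ord_recl big_ord_recl big_ord0 addn0.
by congr (_ + m _)%N; apply: val_inj.
Qed.

Lemma mpolyC_homog (R : ringType) {n} (a : R) : (a%:MP : {mpoly R[n]}) \is 0.-homog.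
Proof. by rewrite -alg_mpolyC rpredZ ?dhomog1. Qed.

Section Dehomogenization.
Variables (R : comNzRingType) (c : R).
Implicit Types (f : {mpoly R[2]}) (F G : {poly R}).

(* [dehomog c f = f(X, 1 + cX)]: the shear by [c] lets us pick a chart in
   which a given nonzero form keeps its full degree. *)
Definition dehomog : {rmorphism {mpoly R[2]} -> {poly R}} :=
  GRing.RMorphism.clone _ _
    (mmap (@polyC R) (fun i => if i == ord0 then 'X else 1 + c *: 'X)) _.

Lemma dehomogC a : dehomog a%:MP = a%:P.
Proof. exact: mmapC. Qed.

Lemma dehomogZ a f : dehomog (a *: f) = a *: dehomog f.
Proof. by rewrite /= mmapZ mul_polyC. Qed.

Lemma dehomogX0 : dehomog 'X_ord0 = 'X.
Proof. by rewrite /= mmapX mmap1U. Qed.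

Lemma dehomogX1 : dehomog 'X_ord_max = 1 + c *: 'X.
Proof. by rewrite /= mmapX mmap1U. Qed.

Definition line_form : {mpoly R[2]} := 'X_ord_max - c *: 'X_ord0.

Lemma dehomog_line_form : dehomog line_form = 1.
Proof. by rewrite rmorphB dehomogZ dehomogX0 dehomogX1 addrK. Qed.

Lemma line_form_homog : line_form \is 1.-homog.
Proof. by rewrite rpredB ?rpredZ // dhomogX /= mdeg1. Qed.

Definition homogenize k F : {mpoly R[2]} :=
  \sum_(i < k.+1) F`_i *: ('X_ord0 ^+ i * line_form ^+ (k - i)).

Lemma homogenize_is_linear k : linear (homogenize k).
Proof.
move=> a F G; rewrite /homogenize scaler_sumr -big_split; apply: eq_bigr => i _.
by rewrite coefD coefZ scalerDl scalerA.
Qed.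
HB.instance Definition _ k := GRing.isLinear.Build R {poly R} {mpoly R[2]} _
  (homogenize k) (homogenize_is_linear k).

Lemma homogenize_homog k F : homogenize k F \is k.-homog.
Proof.
apply: rpred_sum => i _; apply: rpredZ.
have X0_homog : ('X_ord0 : {mpoly R[2]}) \is 1.-homog by rewrite dhomogX /= mdeg1.
have := dhomogM (dhomogMn i X0_homog) (dhomogMn (k - i) line_form_homog).
by rewrite !mul1n subnKC // -ltnS.
Qed.

Lemma dehomog_homogenize k F :
  dehomog (homogenize k F) = \poly_(i < k.+1) F`_i.
Proof.
rewrite poly_def rmorph_sum; apply: eq_bigr => i _.
by rewrite dehomogZ rmorphM !rmorphXn dehomogX0 dehomog_line_form expr1n mulr1.
Qed.

Lemma homogenizeK k F : (size F <= k.+1)%N -> dehomog (homogenize k F) = F.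
Proof. by move=> hF; rewrite dehomog_homogenize coefK_leq. Qed.

Lemma homogenizeXn k i : (i <= k)%N ->
  homogenize k 'X^i = 'X_ord0 ^+ i * line_form ^+ (k - i).
Proof.
move=> hi; rewrite /homogenize (bigD1 (Ordinal (hi : (i < k.+1)%N))) //=.
rewrite coefXn eqxx scale1r big1 ?addr0 // => j /eqP hj.
by rewrite coefXn (_ : _ == _ = false) ?scale0r //; apply/eqP => e; apply/hj/val_inj.
Qed.

Lemma homogenizeM k l F G : (size F <= k.+1)%N -> (size G <= l.+1)%N ->
  homogenize (k + l) (F * G) = homogenize k F * homogenize l G.
Proof.
move=> hF hG; rewrite -(coefK_leq hF) -(coefK_leq hG) !poly_def mulr_suml !linear_sum.
rewrite mulr_suml; apply: eq_bigr => i _; rewrite mulr_sumr !linear_sum mulr_sumr.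
apply: eq_bigr => j _; rewrite -scalerAl -scalerAr !linearZ -scalerAl -scalerAr /=.
congr (_ *: (_ *: _)).
have hi : (i <= k)%N by rewrite -ltnS.
have hj : (j <= l)%N by rewrite -ltnS.
rewrite -exprD !homogenizeXn ?leq_add //.
rewrite (_ : (k + l - (i + j) = k - i + (l - j))%N); last by lia.
by rewrite !exprD mulrACA.
Qed.

Lemma size_line : (size (1 + c *: 'X : {poly R})%R <= 2)%N.
Proof.
rewrite (leq_trans (size_polyD _ _)) // geq_max size_polyC.
by rewrite (leq_trans (leq_b1 _)) // (leq_trans (size_scale_leq _ _)) ?size_polyX.
Qed.

Lemma size_line_exp n : (size ((1 + c *: 'X : {poly R}) ^+ n)%R <= n.+1)%N.
Proof.
rewrite (leq_trans (size_poly_exp_leq _ _)) // ltnS.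
by have := size_line; case: (size _) => [|[|[]]] //= _; rewrite ?mul1n.
Qed.

Lemma coef_line_exp n : ((1 + c *: 'X : {poly R}) ^+ n)`_n = c ^+ n.
Proof.
elim: n => [|n IH]; first by rewrite !expr0 coefC.
rewrite exprSr mulrDr mulr1 coefD -scalerAr coefZ coefMX /= IH exprSr mulrC.
by rewrite nth_default ?add0r // size_line_exp.
Qed.

Lemma homogenize_line_exp n :
  homogenize n ((1 + c *: 'X) ^+ n) = 'X_ord_max ^+ n.
Proof.
elim: n => [|n IH]; first by rewrite !expr0 -(expr0 'X) homogenizeXn // !expr0 mulr1.
rewrite !exprS -[in homogenize n.+1](add1n n) homogenizeM ?size_line ?size_line_exp // IH.
rewrite linearD linearZ /= -(expr0 'X) -{2}(expr1 'X) !homogenizeXn //.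
by rewrite expr0 mul1r expr1 subnn expr0 mulr1 subrK.
Qed.

Lemma dehomogK k f : f \is k.-homog -> homogenize k (dehomog f) = f.
Proof.
move=> /dhomogP hf; rewrite {1}(mpolyE f) rmorph_sum linear_sum [RHS]mpolyE.
apply: eq_big_seq => m /hf <-; rewrite dehomogZ linearZ /=; congr (_ *: _).
rewrite mpolyX2E mdeg2 rmorphM !rmorphXn dehomogX0 dehomogX1.
rewrite homogenizeM ?size_polyXn ?size_line_exp // homogenize_line_exp.
by rewrite homogenizeXn // subnn expr0 mulr1.
Qed.

Lemma dehomog_inj k f g : f \is k.-homog -> g \is k.-homog ->
  dehomog f = dehomog g -> f = g.
Proof. by move=> hf hg e; rewrite -(dehomogK hf) -(dehomogK hg) e. Qed.

Lemma size_dehomog k f : f \is k.-homog -> (size (dehomog f) <= k.+1)%N.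
Proof.
by move=> hf; rewrite -(dehomogK hf) dehomog_homogenize size_poly.
Qed.

End Dehomogenization.

Lemma coef_dehomog_top (R : comNzRingType) (c : R) k (f : {mpoly R[2]}) :
  f \is k.-homog ->
  (dehomog c f)`_k = \sum_(i < k.+1) (dehomog 0 f)`_i * c ^+ (k - i).
Proof.
move=> hf; have hL : dehomog c (line_form 0) = 1 + c *: 'X.
  by rewrite /line_form scale0r subr0 dehomogX1.
rewrite -{1}(dehomogK 0 hf) rmorph_sum coef_sum; apply: eq_bigr => i _.
rewrite dehomogZ coefZ rmorphM !rmorphXn dehomogX0 hL coefXnM ltnNge -ltnS ltn_ord.
by rewrite /= coef_line_exp.
Qed.

Section InfiniteDomain.
Variable R : numDomainType.

Lemma exists_nonroot (P : {poly R}) : P != 0 -> exists x, ~~ root P x.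
Proof.
move=> P0; pose xs : seq R := [seq n%:R | n <- iota 0 (size P)].
have /hasP [x _ hx] : has (fun x => ~~ root P x) xs; last by exists x.
apply/hasPn => noroot; have roots : all (root P) xs by apply/allP => x /noroot/negPn.
have := max_poly_roots P0 roots.
rewrite size_map size_iota ltnn map_inj_uniq ?iota_uniq => [/(_ isT) // | a b /eqP].
by rewrite eqr_nat => /eqP.
Qed.

Lemma exists_size_dehomog k (f : {mpoly R[2]}) : f \is k.-homog -> f != 0 ->
  exists c, size (dehomog c f) = k.+1.
Proof.
move=> hf f0; set F := dehomog 0 f.
have F0 : F != 0 by apply: contra f0 => /eqP F0; rewrite -(dehomogK 0 hf) -/F F0 linear0.
set revF := \poly_(i < k.+1) F`_(k - i).
have revF0 : revF != 0.
  have hdeg : ((size F).-1 <= k)%N by rewrite -ltnS prednK ?size_dehomog ?size_poly_gt0.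
  apply/eqP => /(congr1 (fun P : {poly R} => P`_(k - (size F).-1))).
  rewrite coef_poly ltnS leq_subr subKn // coef0 => /eqP.
  by rewrite -lead_coefE lead_coef_eq0 (negbTE F0).
have [c hc] := exists_nonroot revF0; exists c.
apply/eqP; rewrite eqn_leq size_dehomog //= ltnNge; apply: contra hc => hs.
have := nth_default 0 hs; rewrite coef_dehomog_top // => top0.
rewrite /root horner_poly -[X in _ == X]top0 (reindex_inj rev_ord_inj) /=.
by apply/eqP/eq_bigr => i _; rewrite subSS subKn // -ltnS.
Qed.

End InfiniteDomain.

Lemma mul_sumsq (R : comPzRingType) (U V : seq R) :
  (\sum_(u <- U) u ^+ 2) * (\sum_(v <- V) v ^+ 2) =
  \sum_(w <- [seq u * v | u <- U, v <- V]) w ^+ 2.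
Proof.
rewrite big_allpairs_dep mulr_suml; apply: eq_bigr => u _.
by rewrite mulr_sumr; apply: eq_bigr => v _; rewrite exprMn.
Qed.

Lemma dvdp_sumsq_modp (K : fieldType) (G Q P b : {poly K}) (Z : seq {poly K}) :
  G %| b * Q - 1 -> P * Q = \sum_(z <- Z) z ^+ 2 ->
  G %| P - (\sum_(z <- Z) ((b * z) %% G) ^+ 2) * Q.
Proof.
move=> hb hPQ.
have hres z : G %| ((b * z) %% G) ^+ 2 - (b * z) ^+ 2.
  rewrite subr_sqr dvdp_mulr // {2}(divp_eq (b * z) G) opprD addrCA subrr addr0.
  by rewrite dvdpNr dvdp_mull.
have -> : P - (\sum_(z <- Z) ((b * z) %% G) ^+ 2) * Q =
    - ((\sum_(z <- Z) (((b * z) %% G) ^+ 2 - (b * z) ^+ 2)) * Q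
       + (b * Q - 1) * ((b * Q + 1) * P)).
  have hsum : \sum_(z <- Z) (b * z) ^+ 2 = b ^+ 2 * (P * Q).
    by rewrite hPQ mulr_sumr; apply: eq_bigr => z _; rewrite exprMn.
  by rewrite sumrB hsum; ring.
rewrite dvdpNr dvdp_add ?dvdp_mulr //.
by apply: (big_ind (fun x => G %| x)) => //; apply: dvdp_add.
Qed.

Section BinaryForms.
Variable R : realType.
Implicit Types (f g p q w : {mpoly R[2]}).

Lemma sos_form_homog n p : sos_form n p -> p \is (2 * n).-homog.
Proof.
move=> [ws [hws ->]]; rewrite big_seq; apply: rpred_sum => w /hws hw.
by rewrite mulnC dhomogMn.
Qed.

Lemma sos_form_sqr n w : binary_form n w -> sos_form n (w ^+ 2).
Proof.
by move=> hw; exists [:: w]; rewrite big_seq1; split => // u; rewrite inE => /eqP ->.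
Qed.

Lemma sos_formM a b p q : sos_form a p -> sos_form b q -> sos_form (a + b) (p * q).
Proof.
move=> [us [hus ->]] [vs [hvs ->]]; exists [seq u * v | u <- us, v <- vs].
split; last exact: mul_sumsq.
by move=> _ /allpairsP [[u v] /= [/hus hu /hvs hv ->]]; apply: dhomogM.
Qed.

Lemma dehomog_sos c n p : sos_form n p ->
  exists Z : seq {poly R}, dehomog c p = \sum_(z <- Z) z ^+ 2.
Proof.
move=> [ws [_ ->]]; exists (map (dehomog c) ws); rewrite rmorph_sum big_map.
by apply: eq_bigr => w _; rewrite rmorphXn.
Qed.

Lemma mdivides_homogenize c k r f (H : {poly R}) : f \is k.-homog ->
  H %| dehomog c f -> size H = r.+1 -> mdivides (homogenize c r H) f.
Proof.
move=> hf hH sH; have [F0|F0] := eqVneq (dehomog c f) 0.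
  exists 0; rewrite mulr0.
  by apply: (dehomog_inj (c := c) hf (rpred0 _)); rewrite F0 rmorph0.
have eF : dehomog c f = dehomog c f %/ H * H by rewrite divpK.
set u := dehomog c f %/ H in eF.
have u0 : u != 0 by apply: contra F0 => /eqP u0; rewrite eF u0 mul0r.
have H0 : H != 0 by rewrite -size_poly_eq0 sH.
have := size_dehomog c hf; rewrite eF size_mul // sH addnS /= => hsz.
have u_gt0 : (0 < size u)%N by rewrite size_poly_gt0.
have hrk : (r <= k)%N by move: hsz u_gt0; move: (size u) => n; lia.
exists (homogenize c (k - r) u); apply: (dehomog_inj (c := c) hf).
  have := dhomogM (homogenize_homog c r H) (homogenize_homog c (k - r) u).
  by rewrite subnKC.
rewrite rmorphM homogenizeK ?sH // homogenizeK; first by rewrite mulrC -eF.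
by move: hsz; move: (size u) => n; lia.
Qed.

Lemma coprimep_dehomog c m n g q : g \is m.-homog -> q \is n.-homog ->
  dehomog c g != 0 -> coprime_forms g q -> coprimep (dehomog c g) (dehomog c q).
Proof.
move=> hg hq G0 hcop; apply/coprimepP => h hdg hdq.
have h0 : h != 0 by apply: contra G0 => /eqP h0; rewrite -dvd0p -h0.
have hr : size h = (size h).-1.+1 by rewrite prednK // size_poly_gt0.
have [a ha] := hcop _ (mdivides_homogenize hg hdg hr) (mdivides_homogenize hq hdq hr).
have := congr1 (dehomog c) ha; rewrite homogenizeK -?hr // dehomogC => eh.
by move: h0; rewrite -size_poly_eq1 eh size_polyC polyC_eq0 => ->.
Qed.

Lemma exists_sos_mod0 m d q p : (m <= d)%N -> sos_form (d - m) q -> sos_form d p ->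
  coprime_forms 0 q ->
  exists s : {mpoly R[2]}, sos_form m s /\ exists t : {mpoly R[2]}, p - s * q = t * 0.
Proof.
move=> hmd hq hp hcop.
have [a ha] : exists a, q = a%:MP.
  by apply: hcop; [exists 0; rewrite mulr0 | exists 1; rewrite mulr1].
have a0 : a != 0.
  apply/eqP => a0; have [b hb] : exists b, 'X_ord0 = b%:MP :> {mpoly R[2]}.
    by apply: hcop; exists 0; rewrite mulr0 // ha a0.
  have := congr1 (dehomog 0) hb; rewrite dehomogX0 dehomogC => eX.
  by have := size_polyX R; rewrite eX size_polyC; case: (b != 0).
have hdm : d = m.
  have q0 : q != 0 by rewrite ha mpolyC_eq0.
  have q_homog : q \is 0.-homog by rewrite ha mpolyC_homog.
  by have := dhomog_uniq q0 (sos_form_homog hq) q_homog; lia.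
exists ((a^-1)%:MP ^+ 2 * (p * q)); split.
  have := sos_formM (sos_form_sqr (mpolyC_homog a^-1)) (sos_formM hp hq).
  by rewrite hdm subnn add0n addn0.
exists 0; rewrite mulr0 ha.
rewrite (_ : _ * _ * _ = p * ((a^-1)%:MP * a%:MP) ^+ 2); last by ring.
by rewrite -mpolyCM mulVf // mpolyC1 expr1n mulr1 subrr.
Qed.

Lemma exists_sos_mod m d g q p : (m <= d)%N -> g \is m.-homog -> g != 0 ->
  sos_form (d - m) q -> sos_form d p -> coprime_forms g q ->
  exists s : {mpoly R[2]}, sos_form m s /\ exists t : {mpoly R[2]}, p - s * q = t * g.
Proof.
move=> hmd hg g0 hq hp hcop.
have [c hG] := exists_size_dehomog hg g0.
have G0 : dehomog c g != 0 by rewrite -size_poly_eq0 hG.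
have hq_homog := sos_form_homog hq; have hp_homog := sos_form_homog hp.
have /Bezout_eq1_coprimepP [[u b] /= hub] := coprimep_dehomog hg hq_homog G0 hcop.
have hb : dehomog c g %| b * dehomog c q - 1.
  by rewrite -hub opprD addrCA subrr addr0 dvdpNr dvdp_mull.
have [Z hZ] := dehomog_sos c (sos_formM hp hq); rewrite rmorphM in hZ.
pose w z := homogenize c m ((b * z) %% dehomog c g).
set s := \sum_(z <- Z) w z ^+ 2.
have hs : sos_form m s.
  exists (map w Z); rewrite big_map; split => // _ /mapP [z _ ->].
  exact: homogenize_homog.
have Ds : dehomog c s = \sum_(z <- Z) ((b * z) %% dehomog c g) ^+ 2.
  rewrite rmorph_sum; apply: eq_bigr => z _; rewrite rmorphXn homogenizeK //.
  by rewrite -hG ltnW // ltn_modp.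
have := dvdp_sumsq_modp hb hZ; rewrite -Ds -rmorphM -rmorphB => hdvd.
exists s; split => //.
have hpsq : p - s * q \is (2 * d).-homog.
  rewrite rpredB // (_ : (2 * d = 2 * m + 2 * (d - m))%N); last by lia.
  exact: dhomogM (sos_form_homog hs) hq_homog.
exists (homogenize c (2 * d - m) (dehomog c (p - s * q) %/ dehomog c g)).
apply: (dehomog_inj (c := c) hpsq).
  by have := dhomogM (homogenize_homog c (2 * d - m) _) hg; rewrite subnK //; lia.
rewrite rmorphM homogenizeK ?divpK // size_divp // hG /=.
by have := size_dehomog c hpsq; move: (size _) => n; lia.
Qed.

End BinaryForms.

Theorem lemma3p7 (R : realType) (m d : nat) (g q p : {mpoly R[2]}) :
  (m <= d)%N ->
  binary_form m g ->
  sos_form (d - m) q ->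
  sos_form d p ->
  coprime_forms g q ->
  exists s : {mpoly R[2]},
    sos_form m s /\ exists t : {mpoly R[2]}, p - s * q = t * g.
Proof.
move=> hmd hg hq hp hcop; have [g0|g0] := eqVneq g 0.
  by rewrite g0 in hcop *; exact: (exists_sos_mod0 hmd hq hp hcop).
exact: (exists_sos_mod hmd hg g0 hq hp hcop).
Qed.
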